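(* Every finite simple graph admits a rooted tree decomposition.
   Context: A tree decomposition of a graph $G$ is a pair $(T,\mathcal{V})$ with $T$ a tree and $\mathcal{V}=\{V_t\subseteq V(G): t\in V(T)\}$ such that (T1) $\bigcup_t V_t=V(G)$; (T2) every edge $uv$ of $G$ has both ends in some $V_t$; (T3) for each vertex $v$, the nodes $t$ with $v\in V_t$ induce a connected subtree of $T$. Its width is $\max_t|V_t|-1$, and the treewidth of $G$ is the minimum width of a tree decomposition. If $G$ has treewidth $k$, a tree decomposition $(T,\mathcal{V})$ is full if $|V_t|=k+1$ for every node $t$ and $|V_t\cap V_{t'}|=k$ for every edge $tt'$ of $T$. For a rooted tree $(T,r)$ and a node $t\neq r$, $p(t)$ denotes the neighbour of $t$ on the path from $t$ to $r$ (its parent), and the successors of $t$ are the nodes whose parent is $t$. A triple $(\mathcal{V},T,r)$ is a rooted tree decomposition of $G$ if $(T,\mathcal{V})$ is a full tree decomposition of $G$, $r\in V(T)$, and $V_t\cap V_{p(t)}\neq V_t\cap V_{t'}$ for every node $t\neq r$ and every successor $t'$ of $t$. *)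

From mathcomp Require Import all_boot.
Set Implicit Arguments. Unset Strict Implicit. Unset Printing Implicit Defensive.

(* Graphs: a finite simple graph is a symmetric irreflexive relation on a finType. *)

Definition connected_graph (T : finType) (e : rel T) : Prop :=
  forall x y : T, connect e x y.

(* a cycle: distinct vertices x, x1, ..., xk (k >= 2), consecutive adjacent,
   and xk adjacent to x *)
Definition acyclic (T : finType) (e : rel T) : Prop :=
  forall (x : T) (p : seq T),
    2 <= size p -> uniq (x :: p) -> path e x p -> ~~ e (last x p) x.

Definition is_tree (T : finType) (e : rel T) : Prop :=
  [/\ symmetric e, irreflexive e, (exists t : T, True),
      connected_graph e & acyclic e].

Definition tree_decomposition (V T : finType) (E : rel V) (e : rel T)
  (B : T -> {set V}) : Prop :=
  [/\ is_tree e,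
      forall v : V, exists t : T, v \in B t,
      forall u v : V, E u v -> exists t : T, (u \in B t) && (v \in B t)
    & forall v : V, forall t1 t2 : T, v \in B t1 -> v \in B t2 ->
        connect [rel x y | [&& e x y, v \in B x & v \in B y]] t1 t2].

(* width + 1 = maximum bag size *)
Definition width1 (V T : finType) (B : T -> {set V}) : nat := \max_(t : T) #|B t|.

(* treewidth(G) + 1 = k1 : the minimum of width + 1 over all tree decompositions
   (we use k1 = k + 1 to stay in nat) *)
Definition treewidth1 (V : finType) (E : rel V) (k1 : nat) : Prop :=
  (exists (T : finType) (e : rel T) (B : T -> {set V}),
      tree_decomposition E e B /\ width1 B = k1)
  /\ (forall (T : finType) (e : rel T) (B : T -> {set V}),
      tree_decomposition E e B -> k1 <= width1 B).

Definition full_td (V T : finType) (E : rel V) (e : rel T) (B : T -> {set V}) : Prop :=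
  tree_decomposition E e B /\
  exists k1 : nat, [/\ treewidth1 E k1,
    (forall t : T, #|B t| = k1) &
    (forall t t' : T, e t t' -> #|B t :&: B t'|.+1 = k1)].

(* u = p(t): t <> r and u is the neighbour of t on the path from t to r,
   i.e. t, u, ..., r is a path of distinct vertices *)
Definition parent (T : finType) (e : rel T) (r t u : T) : Prop :=
  t != r /\ exists p : seq T, [/\ path e t (u :: p), uniq (t :: u :: p) & last u p = r].

Definition rooted_td (V T : finType) (E : rel V) (e : rel T) (B : T -> {set V}) (r : T)
  : Prop :=
  full_td E e B /\
  forall t u t' : T, t != r -> parent e r t u -> parent e r t' t ->
    B t :&: B u != B t :&: B t'.

From mathcomp Require Import all_boot.
From Stdlib Require Import Classical.
From Stdlib Require Wf_nat.

(* Start from a tree decomposition (T, B) of minimum width k1 - 1 and turn it into a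
   sequence of bags of size exactly k1, each bag after the first consisting of a vertex
   not seen before together with a (k1 - 1)-subset S of an earlier bag, such that every
   B t lies inside one of them.  This goes by induction on the number of nodes plus
   vertices: at a leaf l of T with neighbour m, either some vertex v of B l is missing
   from B m, and then v lies in no other bag, so we build the sequence without v and
   append v together with a (k1 - 1)-set containing B l - v inside a bag covering it; or
   B l is contained in B m and l can be deleted.  Making every bag a child of the first
   earlier bag containing its S yields a full tree decomposition, and it is rooted: if a
   child t' of t had the same S as t, then S would lie in the parent of t, a bag
   preceding t. *)

Set Implicit Arguments.
Unset Strict Implicit.
Unset Printing Implicit Defensive.

Lemma path_interior (T : eqType) (r : rel T) x p z :
  uniq (x :: p) -> path r x p -> z \in p -> z != last x p ->
  exists a b, [/\ a \in x :: p, b \in x :: p, a != b & r a z && r z b].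
Proof.
move=> + + z_p; case/splitPr: z_p => p1 p2; case: p2 => [|b p2] uniq_p path_p.
  by rewrite last_cat /= eqxx.
move=> _; exists (last x p1), b.
rewrite cat_path /= in path_p; case/and3P: path_p => _ -> /andP[-> _].
have : uniq ((x :: p1) ++ z :: b :: p2) by [].
rewrite cat_uniq => /and3P[_ /hasPn notin_x_p1 _].
have last_p1 := mem_last x p1.
split; rewrite ?andbT //.
- by rewrite -cat_cons mem_cat last_p1.
- by rewrite -cat_cons mem_cat !inE eqxx !orbT.
- have b_notin : b \notin x :: p1 by apply: notin_x_p1; rewrite !inE eqxx orbT.
  by apply: contraNneq b_notin => <-.
Qed.

Section Leaves.

Variables (T : finType) (e : rel T).

Definition induced (A : {set T}) : rel T := [rel x y | [&& e x y, x \in A & y \in A]].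

Definition leaf_of (A : {set T}) l m :=
  [/\ l \in A, m \in A, e l m & {in A, forall y, e l y -> y = m}].

Lemma connect_avoid (r r' : rel T) l m x y :
  (forall z, r l z -> z = m) -> (forall z, r z l -> z = m) ->
  (forall a b, r a b -> a != l -> b != l -> r' a b) ->
  x != l -> y != l -> connect r x y -> connect r' x y.
Proof.
(* On a shortest path both path-neighbours of l would be m. *)
move=> out_l in_l r_r' x_l y_l /connectP[p path_p y_eq]; move: y_l; rewrite y_eq.
case: (shortenP path_p) => q path_q uniq_q _ {p path_p y_eq}; rewrite eq_sym => l_y.
have l_notin_q : l \notin x :: q.
  rewrite inE eq_sym (negbTE x_l) /=; apply/negP => l_q.
  have [a [b [_ _ a_b /andP[/in_l a_m /out_l b_m]]]] :=
    path_interior uniq_q path_q l_q l_y.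
  by rewrite a_m b_m eqxx in a_b.
apply/connectP; exists q => //.
apply: (sub_in_path (P := predC1 l)) path_q => [a b a_l b_l r_ab|].
  exact: r_r' r_ab a_l b_l.
by apply/allP => z z_q; apply: contraNneq l_notin_q => <-.
Qed.

Hypotheses (e_sym : symmetric e) (e_irr : irreflexive e) (e_acyc : acyclic e).

Lemma exists_leaf (A : {set T}) a b :
  a \in A -> b \in A -> a != b -> {in A &, forall x y, connect (induced A) x y} ->
  exists l m, leaf_of A l m.
Proof.
(* The first vertex of a longest path in A is a leaf of A. *)
move=> a_A b_A a_b A_conn.
pose P n := [exists x, exists p : n.-tuple T,
  [&& uniq (x :: p), all (mem A) (x :: p) & path e x p]].
have P0 : P 0 by apply/existsP; exists a; apply/existsP; exists [tuple]; rewrite /= a_A.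
have P_le n : P n -> n <= #|T|.
  case/existsP => x /existsP[p /andP[uniq_xp _]].
  move/card_uniqP: uniq_xp => card_xp.
  by have := max_card (mem (x :: p)); rewrite card_xp /= size_tuple; apply: ltnW.
case: (ex_maxnP (ex_intro _ 0 P0) P_le) => n.
case/existsP => x /existsP[[p size_p] /and3P[/= uniq_xp all_xp path_xp]] max_n.
have x_A : x \in A by case/andP: all_xp.
have nbr_x : {in A, forall y, e x y -> y \in p}.
  move=> y y_A e_xy; apply: contraT => y_p.
  suff /max_n : P n.+1 by rewrite ltnn.
  apply/existsP; exists y; apply/existsP; exists (@Tuple n.+1 T (x :: p) size_p).
  rewrite /= y_A all_xp e_sym e_xy path_xp uniq_xp inE negb_or y_p !andbT.
  by apply: contraTneq e_xy => ->; rewrite e_irr.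
have [y y_A e_xy] : exists2 y, y \in A & e x y.
  have [c c_A x_c] : exists2 c, c \in A & x != c.
    by case: (eqVneq x a) => [->|]; [exists b|exists a].
  case/connectP: (A_conn x c x_A c_A) => -[|y q] /=.
    by move=> _ c_x; rewrite c_x eqxx in x_c.
  by case/andP => /and3P[e_xy _ y_A] _ _; exists y.
clear max_n size_p.
case: p uniq_xp all_xp path_xp nbr_x => [|m q] uniq_xp all_xp path_xp nbr_x.
  by have := nbr_x y y_A e_xy.
exists x, m; split => //; first by case/and3P: all_xp.
  by case/andP: path_xp.
move=> z z_A e_xz; have := nbr_x z z_A e_xz; rewrite inE => /predU1P[//|z_q].
case/splitPr: z_q path_xp uniq_xp => q1 q2; rewrite -cat_rcons.
rewrite -cat_cons cat_path => /andP[path_c _].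
rewrite -[_ && _]/(uniq ((x :: m :: rcons q1 z) ++ q2)) cat_uniq => /andP[uniq_c _].
have size_c : 2 <= size (m :: rcons q1 z) by rewrite /= size_rcons.
by have := e_acyc size_c uniq_c path_c; rewrite /= last_rcons e_sym e_xz.
Qed.

Lemma leaf_neighbour_setD1 (A : {set T}) l m : leaf_of A l m -> m \in A :\ l.
Proof.
case=> _ m_A e_lm _; rewrite in_setD1 m_A andbT.
by apply: contraTneq e_lm => ->; rewrite e_irr.
Qed.

Lemma connect_induced_leaf (A P Q : {set T}) l m x y :
  leaf_of A l m -> P \subset A -> P :\ l \subset Q -> x != l -> y != l ->
  connect (induced P) x y -> connect (induced Q) x y.
Proof.
move=> [_ _ _ leaf_l] /subsetP sPA /subsetP sPQ; apply: connect_avoid.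
- by move=> z /and3P[e_lz _ /sPA z_A]; apply: leaf_l.
- by move=> z /and3P[e_zl /sPA z_A _]; apply: leaf_l; rewrite // e_sym.
- move=> a b /and3P[e_ab a_P b_P] a_l b_l.
  by rewrite /induced /= e_ab !sPQ // in_setD1 ?a_l ?b_l.
Qed.

End Leaves.

Lemma connect_descend (T : finType) (r : rel T) (h : T -> nat) (Q : pred T) t0 :
  (forall t, Q t -> t != t0 -> exists2 u, Q u & (h u < h t) && r t u) ->
  forall t, Q t -> connect r t t0.
Proof.
move=> down t; elim: {t}(h t).+1 {-2}t (ltnSn (h t)) => // k IHk t lt_tk Q_t.
have [-> //|t_t0] := eqVneq t t0.
have [u Q_u /andP[lt_ut r_tu]] := down t Q_t t_t0.
exact: connect_trans (connect1 r_tu) (IHk u (leq_trans lt_ut lt_tk) Q_u).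
Qed.

Lemma exists_argmax_seq (T : finType) (h : T -> nat) x (s : seq T) :
  exists2 m, m \in x :: s & {in x :: s, forall z, h z <= h m}.
Proof. by case: (@arg_maxnP _ x [in x :: s] h (mem_head x s)) => m; exists m. Qed.

Section ParentTree.

Variables (n : nat) (par : nat -> nat).
Hypothesis par_lt : forall t : 'I_n.+1, 0 < t -> par t < t.

Definition par_edge : rel 'I_n.+1 :=
  fun s t => (0 < s) && (par s == t) || (0 < t) && (par t == s).

Lemma par_edge_sym : symmetric par_edge.
Proof. by move=> s t; rewrite /par_edge orbC. Qed.

Lemma par_edge_irr : irreflexive par_edge.
Proof.
move=> t; rewrite /par_edge orbb; apply/negP => /andP[t_gt0 /eqP par_t].
by have := par_lt t_gt0; rewrite par_t ltnn.
Qed.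

Lemma par_edge_lt s t : par_edge s t -> s < t -> par t = s.
Proof.
case/orP => [/andP[s_gt0 /eqP par_s] lt_st|/andP[_ /eqP //]].
by have := par_lt s_gt0; rewrite par_s ltnNge ltnW.
Qed.

Lemma lt0_ord (t : 'I_n.+1) : (0 < t) = (t != ord0).
Proof. by rewrite lt0n. Qed.

Lemma par_edge_down (t : 'I_n.+1) : 0 < t -> exists2 u : 'I_n.+1, par t = u & par_edge t u.
Proof.
move=> t_gt0; have par_t := par_lt t_gt0.
by exists (Ordinal (ltn_trans par_t (ltn_ord t))); rewrite // /par_edge t_gt0 eqxx.
Qed.

Lemma connect_par_closed (Q : pred nat) (t0 : 'I_n.+1) :
  (forall t : 'I_n.+1, Q t -> t != t0 -> (0 < t) && Q (par t)) ->
  forall t1 t2 : 'I_n.+1, Q t1 -> Q t2 ->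
  connect [rel x y | [&& par_edge x y, Q x & Q y]] t1 t2.
Proof.
set r := [rel x y | _] => Q_par.
have to_t0 (t : 'I_n.+1) : Q t -> connect r t t0.
  apply: (@connect_descend _ r (@nat_of_ord _) (fun t : 'I_n.+1 => Q t)) => {}t Q_t t_t0.
  have /andP[t_gt0 Q_par_t] := Q_par t Q_t t_t0.
  have [u par_t e_tu] := par_edge_down t_gt0.
  by exists u; rewrite -par_t // par_lt //= e_tu Q_t -par_t.
have r_sym : symmetric r by move=> x y; rewrite /= par_edge_sym [Q x && _]andbC.
move=> t1 t2 Q_t1 Q_t2; apply: connect_trans (to_t0 t1 Q_t1) _.
by rewrite (sym_connect_sym r_sym) to_t0.
Qed.

Lemma par_edge_acyclic : acyclic par_edge.
Proof.
(* The largest vertex of a cycle would have two smaller neighbours, both its parent. *)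
move=> x p size_p uniq_xp path_xp; apply/negP => e_last.
have [m m_xp max_m] := exists_argmax_seq val x p.
have size_rot_xp k : size (rot k (x :: p)) = (size p).+1 by rewrite size_rot.
case: (rot_to m_xp) => k [|y [|q0 q]] rot_xp; have := size_rot_xp k;
  rewrite rot_xp => -[size_p_eq]; try by rewrite -size_p_eq in size_p.
have cyc : cycle par_edge (m :: y :: q0 :: q).
  by rewrite -rot_xp rot_cycle /= rcons_path path_xp e_last.
have /andP[m_yq /andP[y_q _]] : uniq (m :: y :: q0 :: q) by rewrite -rot_xp rot_uniq.
have lt_m z : z \in y :: q0 :: q -> z < m.
  move=> z_yq; rewrite ltn_neqAle max_m ?andbT; last first.
    by rewrite -(mem_rot k) rot_xp inE z_yq orbT.
  by apply: contraNneq m_yq => /val_inj <-.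
move: cyc => /= /andP[e_my]; rewrite rcons_path => /andP[_ /andP[_ e_zm]].
have par_y := par_edge_lt (etrans (par_edge_sym _ _) e_my) (lt_m y (mem_head _ _)).
have z_yq : last q0 q \in [:: y, q0 & q] by rewrite inE mem_last orbT.
have par_z := par_edge_lt e_zm (lt_m _ z_yq).
move: y_q; rewrite (_ : y = last q0 q) ?mem_last //.
by apply: val_inj; rewrite /= -par_y par_z.
Qed.

Lemma par_edge_connected : connected_graph par_edge.
Proof.
move=> t1 t2; apply: connect_sub (@connect_par_closed xpredT ord0 _ t1 t2 isT isT).
  by move=> x y /andP[e_xy _]; apply: connect1.
by move=> t _; rewrite lt0_ord andbT.
Qed.

Lemma par_edge_tree : is_tree par_edge.
Proof.
split; [exact: par_edge_sym|exact: par_edge_irr|by exists ord0|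
        exact: par_edge_connected|exact: par_edge_acyclic].
Qed.

Lemma par_path_interior x p m :
  uniq (x :: p) -> path par_edge x p -> m \in p -> m != last x p ->
  exists2 y, y \in x :: p & m < y.
Proof.
move=> uniq_xp path_xp m_p m_last.
have [a [b [a_xp b_xp a_b /andP[e_am e_mb]]]] := path_interior uniq_xp path_xp m_p m_last.
case: (ltnP m a) => [|a_le]; first by exists a.
case: (ltnP m b) => [|b_le]; first by exists b.
have below z : par_edge z m -> z <= m -> par m = z.
  move=> e_zm z_le; apply: (par_edge_lt e_zm); rewrite ltn_neqAle z_le andbT.
  by apply: contraTneq e_zm => /val_inj ->; rewrite par_edge_irr.
rewrite par_edge_sym in e_mb; move: a_b; rewrite (_ : a = b) ?eqxx //.
by apply: val_inj; rewrite /= -(below a e_am a_le) -(below b e_mb b_le).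
Qed.

Lemma parent_par_edge t u : parent par_edge ord0 t u -> par t = u.
Proof.
case=> t_ne0 [p [path_tup uniq_tup last_up]].
move: (path_tup) => /= /andP[e_tu _].
move: e_tu; rewrite /par_edge lt0_ord t_ne0 /= => /orP[/eqP //|/andP[u_gt0 /eqP par_u]].
have lt_tu : t < u by rewrite -par_u; apply: par_lt.
(* The path climbs from t to u, so its largest vertex is interior. *)
have [m m_in max_m] := exists_argmax_seq val t (u :: p).
have le_um : u <= m by apply: max_m; rewrite !inE eqxx orbT.
have m_up : m \in u :: p.
  move: m_in; rewrite inE => /predU1P[m_t|//].
  by move: le_um; rewrite m_t leqNgt lt_tu.
have m_last : m != last u p.
  by rewrite last_up -lt0_ord; apply: leq_trans le_um.
have [y y_in lt_my] := par_path_interior uniq_tup path_tup m_up m_last.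
by move: lt_my; rewrite ltnNge max_m.
Qed.

End ParentTree.

Lemma setU1I_notin (T : finType) (v : T) (S U : {set T}) :
  S \subset U -> v \notin U -> (v |: S) :&: U = S.
Proof.
move=> sSU vU; apply/setP => z; rewrite inE in_setU1.
have [-> /=|_ /=] := eqVneq z v; last by rewrite andb_idr // => /(subsetP sSU).
by rewrite (negbTE vU); apply/esym; apply: contraNF vU => /(subsetP sSU).
Qed.

Lemma mem_bigcup_seq (T : finType) (s : seq {set T}) X v :
  X \in s -> v \in X -> v \in \bigcup_(Y <- s) Y.
Proof. by move=> X_s v_X; rewrite bigcup_seq; apply/bigcupP; exists X. Qed.

Section Chains.

Variables (V : finType) (k1 : nat).

Inductive chain : seq {set V} -> Prop :=
| chain1 (X : {set V}) : #|X| = k1 -> chain [:: X]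
| chain_rcons bs v (S : {set V}) : chain bs -> #|S|.+1 = k1 ->
    has (fun X : {set V} => S \subset X) bs -> all (fun X : {set V} => v \notin X) bs ->
    chain (rcons bs (v |: S)).

(* For a chain, [sep bs i] is the set S with which the i-th bag was added. *)
Definition sep (bs : seq {set V}) i := nth set0 bs i :&: \bigcup_(X <- take i bs) X.

(* Taking the first bag containing the separator is what makes the decomposition
   rooted, see [chain_parent_sep]. *)
Definition par_bag (bs : seq {set V}) i := find (fun X : {set V} => sep bs i \subset X) bs.

Lemma chain_card bs : chain bs -> {in bs, forall X : {set V}, #|X| = k1}.
Proof.
elim=> [X card_X Y|{}bs v S _ IH card_S /hasP[Y Y_bs S_Y] /allP v_bs X].
  by rewrite inE => /eqP ->.
rewrite mem_rcons inE => /predU1P[->|]; last exact: IH.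
rewrite cardsU1 -card_S; suff -> : v \notin S by [].
by apply: contra (v_bs Y Y_bs) => /(subsetP S_Y).
Qed.

Lemma chain_nth bs i : chain bs -> 0 < i < size bs ->
  exists v, [/\ nth set0 bs i = v |: sep bs i, v \notin \bigcup_(X <- take i bs) X,
                #|sep bs i|.+1 = k1 & has (fun X : {set V} => sep bs i \subset X) (take i bs)].
Proof.
move=> bs_chain; elim: bs_chain i => [X _ [|[|i]] //|{}bs v S _ IH card_S has_S all_v] i.
rewrite size_rcons ltnS -cats1 => /andP[i_gt0]; rewrite leq_eqVlt => /orP[/eqP ->|lt_i].
  have v_bs : v \notin \bigcup_(X <- bs) X.
    by rewrite bigcup_seq; apply/bigcupP => -[X X_bs]; apply/negP/(allP all_v).
  have S_bs : S \subset \bigcup_(X <- bs) X.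
    by case/hasP: has_S => X X_bs S_X; rewrite bigcup_seq (subset_trans S_X) ?bigcup_sup.
  rewrite /sep take_size_cat // nth_cat ltnn subnn -[nth _ _ 0]/(v |: S) setU1I_notin //.
  by exists v.
have sep_cat : sep (bs ++ [:: v |: S]) i = sep bs i.
  by rewrite /sep nth_cat lt_i (takel_cat _ (ltnW lt_i)).
rewrite sep_cat nth_cat lt_i (takel_cat _ (ltnW lt_i)); apply: IH.
by rewrite i_gt0.
Qed.

Section ChainBags.

Variable bs : seq {set V}.
Hypothesis bs_chain : chain bs.

Lemma chain_size_gt0 : 0 < size bs.
Proof. by case: bs_chain => // *; rewrite size_rcons. Qed.

Lemma par_bag_lt i : 0 < i < size bs -> par_bag bs i < i.
Proof.
move=> i_bs; have [v [_ _ _]] := chain_nth bs_chain i_bs.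
by rewrite has_take_leq // ltnW //; case/andP: i_bs.
Qed.

Lemma sep_sub_par_bag i : 0 < i < size bs -> sep bs i \subset nth set0 bs (par_bag bs i).
Proof.
move=> i_bs; have /andP[_ lt_i] := i_bs.
apply: (nth_find set0 (a := fun X : {set V} => sep bs i \subset X)); rewrite has_find.
exact: ltn_trans (par_bag_lt i_bs) lt_i.
Qed.

Lemma par_bag_min i j : j < par_bag bs i -> ~~ (sep bs i \subset nth set0 bs j).
Proof. by move=> lt_j; rewrite (before_find set0 lt_j). Qed.

Lemma sep_card i : 0 < i < size bs -> #|sep bs i|.+1 = k1.
Proof. by case/(chain_nth bs_chain) => v []. Qed.

Lemma bag_par_bag_sep i :
  0 < i < size bs -> nth set0 bs i :&: nth set0 bs (par_bag bs i) = sep bs i.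
Proof.
move=> i_bs; have /andP[_ lt_i] := i_bs.
have [v [-> v_prev _ _]] := chain_nth bs_chain i_bs.
rewrite setU1I_notin ?sep_sub_par_bag //; apply: contra v_prev.
apply: mem_bigcup_seq; rewrite -(nth_take _ (par_bag_lt i_bs)) mem_nth //.
by rewrite size_takel ?(ltnW lt_i) ?(par_bag_lt i_bs).
Qed.

Lemma mem_sep i j v : j < i -> v \in nth set0 bs j -> v \in nth set0 bs i -> v \in sep bs i.
Proof.
move=> lt_ji v_j v_i; rewrite /sep inE v_i /=.
have [j_bs|j_bs] := ltnP j (size bs); last by rewrite nth_default ?inE in v_j.
apply: (mem_bigcup_seq _ v_j); rewrite -(nth_take _ lt_ji) mem_nth // size_take.
by case: ifP.
Qed.

End ChainBags.

End Chains.

Section ChainDecomposition.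

Variables (V : finType) (k1 : nat) (bs : seq {set V}).
Hypothesis bs_chain : chain k1 bs.

Let n := (size bs).-1.

Let size_bs : size bs = n.+1.
Proof. by rewrite prednK // (chain_size_gt0 bs_chain). Qed.

Let bag (t : 'I_n.+1) := nth set0 bs t.

Let ord_bs (t : 'I_n.+1) : 0 < t -> 0 < t < size bs.
Proof. by rewrite size_bs ltn_ord andbT. Qed.

Let par_lt (t : 'I_n.+1) : 0 < t -> par_bag bs t < t.
Proof. by move=> t_gt0; exact: (par_bag_lt bs_chain (ord_bs t_gt0)). Qed.

Let e := @par_edge n (par_bag bs).

Lemma chain_connect_bags v (t1 t2 : 'I_n.+1) : v \in bag t1 -> v \in bag t2 ->
  connect [rel x y | [&& e x y, v \in bag x & v \in bag y]] t1 t2.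
Proof.
move=> v_t1 v_t2.
have [t0 v_t0 min_t0] := @arg_minnP _ t1 (fun t => v \in bag t) (@nat_of_ord _) v_t1.
apply: (@connect_par_closed n _ par_lt (fun i => v \in nth set0 bs i) t0) => // t v_t t_t0.
have lt_t0t : t0 < t.
  by rewrite ltn_neqAle min_t0 // andbT; apply: contraNneq t_t0 => /val_inj ->.
have t_gt0 : 0 < t := leq_ltn_trans (leq0n _) lt_t0t.
rewrite t_gt0 /=; apply: (subsetP (sep_sub_par_bag bs_chain (ord_bs t_gt0))).
exact: mem_sep lt_t0t v_t0 v_t.
Qed.

Lemma chain_adjacent_card (t t' : 'I_n.+1) : e t t' -> #|bag t :&: bag t'|.+1 = k1.
Proof.
wlog: t t' / (0 < t) && (par_bag bs t == t') => [wlog_e|/andP[t_gt0 /eqP par_t]] e_tt'.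
  case/orP: (e_tt') => /wlog_e; first exact.
  by rewrite setIC; apply; rewrite /e par_edge_sym.
by rewrite /bag -par_t (bag_par_bag_sep bs_chain) ?(sep_card bs_chain) ?ord_bs.
Qed.

Lemma chain_parent_sep t u t' :
  parent e ord0 t u -> parent e ord0 t' t -> bag t :&: bag u != bag t :&: bag t'.
Proof.
move=> t_u t'_t; have par_t := parent_par_edge par_lt t_u.
have par_t' := parent_par_edge par_lt t'_t.
case: t_u t'_t => + _ [+ _]; rewrite -!lt0_ord => t_gt0 t'_gt0.
have -> : bag t :&: bag u = sep bs t.
  by rewrite /bag -par_t (bag_par_bag_sep bs_chain) ?ord_bs.
have -> : bag t :&: bag t' = sep bs t'.
  by rewrite setIC /bag -par_t' (bag_par_bag_sep bs_chain) ?ord_bs.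
have lt_par : par_bag bs t < par_bag bs t' by rewrite par_t' par_lt.
apply: contraNneq (par_bag_min lt_par) => <-.
by rewrite (sep_sub_par_bag bs_chain) ?ord_bs.
Qed.

Lemma rooted_td_of_chain (E : rel V) (T : finType) (e0 : rel T) (B0 : T -> {set V}) :
  treewidth1 E k1 -> tree_decomposition E e0 B0 ->
  (forall t, exists2 X, X \in bs & B0 t \subset X) ->
  exists (T' : finType) (e' : rel T') (B : T' -> {set V}) (r : T'), rooted_td E e' B r.
Proof.
move=> tw [_ B0_cover B0_edges _] B0_sub.
have bag_of t0 : exists t, B0 t0 \subset bag t.
  have [X X_bs sub_X] := B0_sub t0.
  have idx : index X bs < n.+1 by rewrite -size_bs index_mem.
  by exists (Ordinal idx); rewrite /bag nth_index.
exists 'I_n.+1, e, bag, ord0.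
split; [split; [split|exists k1; split]|].
- exact: par_edge_tree par_lt.
- move=> v; have [t0 v_t0] := B0_cover v; have [t /subsetP sub_t] := bag_of t0.
  by exists t; apply: sub_t.
- move=> u v /B0_edges[t0 /andP[u_t0 v_t0]]; have [t /subsetP sub_t] := bag_of t0.
  by exists t; rewrite !sub_t.
- exact: chain_connect_bags.
- exact: tw.
- by move=> t; apply: (chain_card bs_chain); rewrite mem_nth // size_bs.
- exact: chain_adjacent_card.
- by move=> t u t' _; apply: chain_parent_sep.
Qed.

End ChainDecomposition.

Lemma exists_card_between (T : finType) (A X : {set T}) k :
  A \subset X -> #|A| <= k -> k <= #|X| ->
  exists S : {set T}, [/\ A \subset S, S \subset X & #|S| = k].
Proof.
move=> sAX le_Ak le_kX.
have : k - #|A| <= #|X :\: A| by rewrite cardsD (setIidPr sAX) leq_sub2r.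
case/card_geqP => s [uniq_s size_s s_XA].
have As0 : A :&: [set x in s] = set0.
  by apply/setP => x; rewrite !inE; apply/andP => -[x_A /s_XA]; rewrite inE x_A.
exists (A :|: [set x in s]); split; first exact: subsetUl.
  rewrite subUset sAX; apply/subsetP => x; rewrite inE => /s_XA.
  by rewrite inE => /andP[].
move/card_uniqP: uniq_s => card_s.
by rewrite cardsU As0 cards0 subn0 cardsE card_s size_s subnKC.
Qed.

Section CoveringChain.

Variables (T V : finType) (e : rel T) (B : T -> {set V}) (k1 : nat).
Hypotheses (e_sym : symmetric e) (e_irr : irreflexive e) (e_acyc : acyclic e).
Hypothesis B_card : forall t, #|B t| <= k1.

(* The bags [B t :&: W], for t in A, form a tree decomposition of W over A. *)
Definition partial_td (A : {set T}) (W : {set V}) : Prop :=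
  [/\ A != set0,
      {in A &, forall x y, connect (induced e A) x y},
      forall w, w \in W -> exists2 t, t \in A & w \in B t
    & forall w t1 t2, w \in W -> t1 \in A -> t2 \in A -> w \in B t1 -> w \in B t2 ->
        connect (induced e [set t in A | w \in B t]) t1 t2].

Definition covering_chain (A : {set T}) (W : {set V}) (bs : seq {set V}) : Prop :=
  [/\ chain k1 bs, all (fun X : {set V} => X \subset W) bs
    & forall t, t \in A -> exists2 X, X \in bs & B t :&: W \subset X].

Lemma partial_td_setD1 A W v : partial_td A W -> partial_td A (W :\ v).
Proof.
case=> A_ne0 A_conn W_cover W_conn.
split=> // [w /setD1P[_ /W_cover] //|w t1 t2 /setD1P[_ w_W]].
exact: W_conn.
Qed.

Lemma partial_td_delleaf A W l m :
  partial_td A W -> leaf_of e A l m -> B l :&: W \subset B m -> partial_td (A :\ l) W.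
Proof.
case=> _ A_conn W_cover W_conn leaf_lm sub_lm.
have m_Al := leaf_neighbour_setD1 e_irr leaf_lm.
split.
- by apply/set0Pn; exists m.
- move=> x y /setD1P[x_l x_A] /setD1P[y_l y_A].
  exact: (connect_induced_leaf e_sym leaf_lm (subxx A) (subxx _) x_l y_l (A_conn x y x_A y_A)).
- move=> w w_W; have [t t_A w_t] := W_cover w w_W.
  have [t_l|t_l] := eqVneq t l; last by exists t; rewrite // in_setD1 t_l.
  by exists m => //; apply: (subsetP sub_lm); rewrite inE -t_l w_t.
- move=> w t1 t2 w_W /setD1P[t1_l t1_A] /setD1P[t2_l t2_A] w_t1 w_t2.
  have := W_conn w t1 t2 w_W t1_A t2_A w_t1 w_t2.
  apply: (connect_induced_leaf e_sym leaf_lm _ _ t1_l t2_l).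
    by apply/subsetP => t; rewrite inE => /andP[].
  by apply/subsetP => t; rewrite !inE => /andP[-> /andP[-> ->]].
Qed.

Lemma partial_td_private A W l m v :
  partial_td A W -> leaf_of e A l m -> v \in W -> v \in B l -> v \notin B m ->
  forall t, t \in A -> v \in B t -> t = l.
Proof.
case=> _ _ _ W_conn [l_A _ _ leaf_l] v_W v_l v_m t t_A v_t.
apply/eqP; apply: contraNT v_m => t_l.
case/connectP: (W_conn v l t v_W l_A t_A v_l v_t) => -[/= _ t_eq|y p /=].
  by rewrite -t_eq eqxx in t_l.
case/andP => /and3P[e_ly _]; rewrite inE => /andP[y_A v_y] _ _.
by rewrite -(leaf_l y y_A e_ly).
Qed.

Lemma partial_td_two_nodes A W : partial_td A W -> k1 < #|W| ->
  exists a b, [/\ a \in A, b \in A & a != b].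
Proof.
case=> /set0Pn[a a_A] _ W_cover _ k1_W.
case: (pickP [pred b in A | a != b]) => [b /andP[b_A a_b]|single]; first by exists a, b.
suff : W \subset B a by move/subset_leq_card/leq_trans/(_ (B_card a)); rewrite leqNgt k1_W.
apply/subsetP => w /W_cover[t t_A w_t].
by move: (single t); rewrite /= t_A /= => /negbFE/eqP ->.
Qed.

Lemma covering_chain_base A (W : {set V}) : #|W| = k1 -> covering_chain A W [:: W].
Proof.
by split=> [|/=|t _]; [constructor|rewrite subxx|exists W; rewrite ?mem_head ?subsetIr].
Qed.

Lemma covering_chain_delleaf (A : {set T}) W l m bs :
  l \in A -> m \in A :\ l -> B l :&: W \subset B m ->
  covering_chain (A :\ l) W bs -> covering_chain A W bs.
Proof.
move=> l_A m_Al sub_lm [bs_chain bs_W cover]; split=> // t t_A.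
have [->|t_l] := eqVneq t l; last by apply: cover; rewrite in_setD1 t_l.
have [X X_bs sub_X] := cover m m_Al; exists X => //.
by apply: subset_trans sub_X; rewrite subsetI sub_lm subsetIr.
Qed.

Lemma covering_chain_private (A : {set T}) (W : {set V}) l v bs :
  l \in A -> v \in W -> v \in B l -> (forall t, t \in A -> v \in B t -> t = l) ->
  covering_chain A (W :\ v) bs -> exists bs', covering_chain A W bs'.
Proof.
move=> l_A v_W v_l private_v [bs_chain bs_W cover].
have [X X_bs sub_X] := cover l l_A.
have k1_gt0 : 0 < k1 by apply: leq_trans (B_card l); rewrite card_gt0; apply/set0Pn; exists v.
have card_l : #|B l :&: (W :\ v)| <= k1.-1.
  rewrite -ltnS prednK //; apply: leq_trans (B_card l); apply: proper_card.
  rewrite properE subsetIl; apply/subsetPn; exists v => //.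
  by rewrite !inE eqxx andbF.
have card_X : k1.-1 <= #|X| by rewrite (chain_card bs_chain X_bs) leq_pred.
have [S [sub_S S_X card_S]] := exists_card_between sub_X card_l card_X.
have v_bs : all (fun X : {set V} => v \notin X) bs.
  by apply/allP => Y /(allP bs_W) /subsetP Y_W; apply/negP => /Y_W; rewrite !inE eqxx.
exists (rcons bs (v |: S)); split.
- apply: chain_rcons => //; first by rewrite card_S prednK.
  by apply/hasP; exists X.
- have bs_W' : all (fun X : {set V} => X \subset W) bs.
    by apply/allP => Y /(allP bs_W) /subset_trans; apply; apply: subsetDl.
  by rewrite all_rcons bs_W' subUset sub1set v_W (subset_trans S_X) ?(allP bs_W').
- move=> t t_A; have [t_l|t_l] := eqVneq t l.
    exists (v |: S); first by rewrite mem_rcons mem_head.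
    apply/subsetP => z; rewrite t_l inE in_setU1 => /andP[z_l z_W].
    by have [//|z_v] := eqVneq z v; rewrite (subsetP sub_S) // !inE z_l z_v z_W.
  have [Y Y_bs sub_Y] := cover t t_A; exists Y; first by rewrite mem_rcons inE Y_bs orbT.
  apply: subset_trans sub_Y; apply/subsetP => z; rewrite !inE => /andP[z_t ->].
  rewrite z_t /= andbT; apply: contraTneq z_t => ->.
  by apply: contraNN t_l => /(private_v t t_A) ->.
Qed.

Lemma partial_td_of_td (E : rel V) :
  tree_decomposition E e B -> partial_td [set: T] [set: V].
Proof.
case=> [[_ _ [t0 _] e_conn _] B_cover _ B_conn]; split.
- by apply/set0Pn; exists t0.
- move=> x y _ _; rewrite (@eq_connect _ _ e) ?e_conn // => a b.
  by rewrite /induced /= !inE !andbT.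
- by move=> w _; have [t w_t] := B_cover w; exists t.
- move=> w t1 t2 _ _ _ w_t1 w_t2.
  rewrite (@eq_connect _ _ [rel x y | [&& e x y, w \in B x & w \in B y]]) ?B_conn // => a b.
  by rewrite /induced /= !inE.
Qed.

Lemma covering_chain_of_partial_td A W :
  partial_td A W -> k1 <= #|W| -> exists bs, covering_chain A W bs.
Proof.
move: {2}(#|A| + #|W|) (leqnn (#|A| + #|W|)) => N.
elim: N A W => [|N IH] A W size_AW ptd.
  have [A_ne0 _ _ _] := ptd.
  by move: size_AW; rewrite leqn0 addn_eq0 cards_eq0 (negbTE A_ne0).
rewrite leq_eqVlt => /orP[/eqP k1_W|k1_W]; first by exists [:: W]; apply: covering_chain_base.
have [a [b [a_A b_A a_b]]] := partial_td_two_nodes ptd k1_W.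
have [_ A_conn _ _] := ptd.
have [l [m leaf_lm]] := exists_leaf e_sym e_irr e_acyc a_A b_A a_b A_conn.
have l_A : l \in A by case: leaf_lm.
case: (pickP [pred v in W | (v \in B l) && (v \notin B m)]).
  move=> v /and3P[v_W v_l v_m].
  have card_W : #|W| = #|W :\ v|.+1 by rewrite (cardsD1 v W) v_W.
  have [bs cc] : exists bs, covering_chain A (W :\ v) bs.
    apply: IH; [by rewrite card_W addnS in size_AW|exact: partial_td_setD1|].
    by rewrite -ltnS -card_W.
  exact: covering_chain_private l_A v_W v_l (partial_td_private ptd leaf_lm v_W v_l v_m) cc.
move=> no_private.
have sub_lm : B l :&: W \subset B m.
  apply/subsetP => v; rewrite inE => /andP[v_l v_W].
  by move: (no_private v); rewrite /= v_W v_l => /negbFE.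
have card_A : #|A| = #|A :\ l|.+1 by rewrite (cardsD1 l A) l_A.
have [bs cc] : exists bs, covering_chain (A :\ l) W bs.
  apply: IH; [by rewrite card_A addSn in size_AW| |exact: ltnW].
  exact: partial_td_delleaf ptd leaf_lm sub_lm.
by exists bs; apply: covering_chain_delleaf l_A (leaf_neighbour_setD1 e_irr leaf_lm) sub_lm cc.
Qed.

End CoveringChain.

Lemma one_bag_td (V : finType) (E : rel V) :
  tree_decomposition E (fun _ _ : unit => false) (fun _ => [set: V]).
Proof.
split=> [|v|u v _|v [] [] _ _]; last exact: connect0.
- by split=> // [[] []]; exact: connect0.
- by exists tt; rewrite inE.
- by exists tt; rewrite !inE.
Qed.

Lemma exists_treewidth1 (V : finType) (E : rel V) : exists k1, treewidth1 E k1.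
Proof.
pose P k := exists (T : finType) (e : rel T) (B : T -> {set V}),
  tree_decomposition E e B /\ width1 B = k.
have P_V : P #|V|.
  exists unit, (fun _ _ => false), (fun _ => [set: V]); split; first exact: one_bag_td.
  by rewrite /width1 (big_pred1 tt) ?cardsT // => -[].
have [k1 [[P_k1 min_k1] _]] := Wf_nat.dec_inh_nat_subset_has_unique_least_element
  P (fun k => classic (P k)) (ex_intro _ _ P_V).
by exists k1; split=> // T e B td; apply/leP; apply: min_k1; exists T, e, B.
Qed.

Theorem proposition2p3 (V : finType) (E : rel V)
  (Esym : symmetric E) (Eirr : irreflexive E) :
  exists (T : finType) (e : rel T) (B : T -> {set V}) (r : T), rooted_td E e B r.
Proof.
have [k1 tw] := exists_treewidth1 E.
have [[T [e [B [td width_B]]]] _] := tw.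
have [[e_sym e_irr _ _ e_acyc] _ _ _] := td.
have B_card t : #|B t| <= k1 by rewrite -width_B; apply: leq_bigmax.
have k1_V : k1 <= #|[set: V]|.
  by rewrite -width_B cardsT; apply/bigmax_leqP => t _; apply: max_card.
have [bs [bs_chain _ cover]] := covering_chain_of_partial_td e_sym e_irr e_acyc B_card
  (partial_td_of_td td) k1_V.
apply: (rooted_td_of_chain bs_chain tw td) => t.
by have [X X_bs] := cover t (in_setT t); rewrite setIT; exists X.
Qed.
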